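(* Let $l,n$ be positive integers, $\mathbf{x}_1,\dots,\mathbf{x}_l\in\mathbb{R}^n$, $y_1,\dots,y_l\in\mathbb{R}$, $a_1,\dots,a_l,b_1,\dots,b_l\in\mathbb{R}$. Let $\varphi:\mathbb{R}\to[0,\infty)$ be nonconstant, continuous and sublinear, with $\varphi^*=\iota_{[\alpha,\beta]}$, $\alpha<\beta$. For $C>0$ let $\mathbf w^*(C)$ be the optimal solution of $$\min_{\mathbf w\in\mathbb{R}^n}\tfrac12\|\mathbf w\|^2+C\sum_{i=1}^l\varphi\big(\mathbf w^T(a_i\mathbf x_i)+b_iy_i\big),$$ and let $\theta^*(C)$ be an optimal solution of the dual problem $\min_{\theta\in[\alpha,\beta]^l}\frac{C}{2}\|\mathbf Z^T\theta\|^2-\langle\bar{\mathbf y},\theta\rangle$, where $\mathbf Z\in\mathbb{R}^{l\times n}$ has $i$-th row $a_i\mathbf x_i^T$ and $\bar{\mathbf y}=(b_1y_1,\dots,b_ly_l)^T$. Let $0<C_1<\dots<C_{\mathcal K}$ and suppose $\mathbf w^*(C_k)$ is known for some integer $1\le k<\mathcal K$. If $$-\tfrac{C_k+C_{k+1}}{2C_k}\langle\mathbf w^*(C_k),a_i\mathbf x_i\rangle-\tfrac{C_{k+1}-C_k}{2C_k}\|\mathbf w^*(C_k)\|\,\|a_i\mathbf x_i\|>b_iy_i,$$ then $[\theta^*(C_{k+1})]_i=\alpha$, i.e., $i\in\mathcal R$ (at $C=C_{k+1}$). Similarly, if $$-\tfrac{C_k+C_{k+1}}{2C_k}\langle\mathbf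 w^*(C_k),a_i\mathbf x_i\rangle+\tfrac{C_{k+1}-C_k}{2C_k}\|\mathbf w^*(C_k)\|\,\|a_i\mathbf x_i\|<b_iy_i,$$ then $[\theta^*(C_{k+1})]_i=\beta$, i.e., $i\in\mathcal L$.
   Context: Sublinear means convex and $\varphi(tx)=t\varphi(x)$ for $t>0$; $\varphi^*(s)=\sup_t(st-\varphi(t))$; $\iota_{[\alpha,\beta]}$ is $0$ on $[\alpha,\beta]$ and $+\infty$ elsewhere. Primal and dual solutions satisfy $\mathbf w^*(C)=-C\mathbf Z^T\theta^*(C)$. At parameter $C$: $\mathcal R=\{i:-\langle\mathbf w^*(C),a_i\mathbf x_i\rangle>b_iy_i\}$, $\mathcal L=\{i:-\langle\mathbf w^*(C),a_i\mathbf x_i\rangle<b_iy_i\}$. *)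

From HB Require Import structures.
From mathcomp Require Import all_boot all_order all_algebra.
From mathcomp Require Import all_classical all_reals all_analysis.
Set Implicit Arguments. Unset Strict Implicit. Unset Printing Implicit Defensive.
Import Order.TTheory GRing.Theory Num.Theory.
Import numFieldNormedType.Exports.
Local Open Scope classical_set_scope.
Local Open Scope ring_scope.

Section Defs.
Variable R : realType.

Definition dotv (n : nat) (u v : 'cV[R]_n) : R := (u^T *m v) 0 0.
Definition normv (n : nat) (u : 'cV[R]_n) : R := Num.sqrt (dotv u u).

Definition fconj (phi : R -> R) (s : R) : \bar R :=
  ereal_sup [set ((s * t - phi t)%:E) | t in [set: R]].

Definition iota_itv (alpha beta : R) (s : R) : \bar R :=
  if (alpha <= s) && (s <= beta) then 0%E else +oo%E.

Definition sublinear (phi : R -> R) : Prop :=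
  (forall (x y lam : R), 0 <= lam -> lam <= 1 ->
     phi (lam * x + (1 - lam) * y) <= lam * phi x + (1 - lam) * phi y) /\
  (forall (t x : R), 0 < t -> phi (t * x) = t * phi x).

Definition Zmat (l n : nat) (a : 'I_l -> R) (x : 'I_l -> 'cV[R]_n) : 'M[R]_(l, n) :=
  \matrix_(i < l, j < n) (a i * x i j 0).
Definition ybar (l : nat) (b y : 'I_l -> R) : 'cV[R]_l :=
  \col_(i < l) (b i * y i).

Definition primal_obj (l n : nat) (phi : R -> R) (a b y : 'I_l -> R)
  (x : 'I_l -> 'cV[R]_n) (C : R) (w : 'cV[R]_n) : R :=
  2^-1 * (normv w) ^+ 2 +
  C * \sum_(i < l) phi (dotv w (a i *: x i) + b i * y i).

Definition primal_opt (l n : nat) (phi : R -> R) (a b y : 'I_l -> R)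
  (x : 'I_l -> 'cV[R]_n) (C : R) (w : 'cV[R]_n) : Prop :=
  forall v : 'cV[R]_n, primal_obj phi a b y x C w <= primal_obj phi a b y x C v.

Definition dual_obj (l n : nat) (a b y : 'I_l -> R) (x : 'I_l -> 'cV[R]_n)
  (C : R) (theta : 'cV[R]_l) : R :=
  C / 2 * (normv ((Zmat a x)^T *m theta)) ^+ 2 - dotv (ybar b y) theta.

Definition dual_feas (l : nat) (alpha beta : R) (theta : 'cV[R]_l) : Prop :=
  forall i : 'I_l, alpha <= theta i 0 <= beta.

Definition dual_opt (l n : nat) (alpha beta : R) (a b y : 'I_l -> R)
  (x : 'I_l -> 'cV[R]_n) (C : R) (theta : 'cV[R]_l) : Prop :=
  dual_feas alpha beta theta /\
  forall th : 'cV[R]_l, dual_feas alpha beta th ->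
    dual_obj a b y x C theta <= dual_obj a b y x C th.

Definition in_calR (l n : nat) (a b y : 'I_l -> R) (x : 'I_l -> 'cV[R]_n)
  (w : 'cV[R]_n) (i : 'I_l) : Prop := - dotv w (a i *: x i) > b i * y i.
Definition in_calL (l n : nat) (a b y : 'I_l -> R) (x : 'I_l -> 'cV[R]_n)
  (w : 'cV[R]_n) (i : 'I_l) : Prop := - dotv w (a i *: x i) < b i * y i.
End Defs.

(* The conjugate condition forces phi t = max (alpha t, beta t).  Both the
   primal optimum w*(C) and the point -C Z^T theta*(C) built from a dual
   optimum satisfy the variational inequality
   <w, v - w> + C (L v - L w) >= 0 of the primal problem (the latter by
   complementary slackness), hence they coincide, and the dual optimality
   conditions give theta_i = alpha on R and theta_i = beta on L.  Weighing the
   variational inequalities at C_k and C_(k+1) against each other puts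
   w*(C_(k+1)) in the ball of centre (C_k + C_(k+1)) / (2 C_k) w*(C_k) and
   radius (C_(k+1) - C_k) / (2 C_k) ||w*(C_k)||; bounding <w*(C_(k+1)), a_i x_i>
   over that ball by Cauchy-Schwarz yields the screening test. *)

From HB Require Import structures.
From mathcomp Require Import all_boot all_order all_algebra.
From mathcomp Require Import all_classical all_reals all_analysis.
From mathcomp Require Import ring lra.
Set Implicit Arguments. Unset Strict Implicit. Unset Printing Implicit Defensive.
Import Order.TTheory GRing.Theory Num.Theory.
Import numFieldNormedType.Exports.
Local Open Scope ring_scope.

Section InnerProduct.
Variables (R : realType) (n : nat).
Implicit Types (u v w : 'cV[R]_n) (c : R).

Lemma dotvE u v : dotv u v = \sum_j u j 0 * v j 0.
Proof. by rewrite /dotv mxE; apply: eq_bigr => j _; rewrite mxE. Qed.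

Lemma dotvC u v : dotv u v = dotv v u.
Proof. by rewrite !dotvE; apply: eq_bigr => j _; rewrite mulrC. Qed.

Lemma dotvDl u v w : dotv (u + v) w = dotv u w + dotv v w.
Proof. by rewrite !dotvE -big_split; apply: eq_bigr => j _; rewrite !mxE mulrDl. Qed.

Lemma dotvZl c u w : dotv (c *: u) w = c * dotv u w.
Proof. by rewrite !dotvE mulr_sumr; apply: eq_bigr => j _; rewrite !mxE mulrA. Qed.

Lemma dotvNl u w : dotv (- u) w = - dotv u w.
Proof. by rewrite -scaleN1r dotvZl mulN1r. Qed.

Lemma dotvBl u v w : dotv (u - v) w = dotv u w - dotv v w.
Proof. by rewrite dotvDl dotvNl. Qed.

Lemma dotvDr u v w : dotv w (u + v) = dotv w u + dotv w v.
Proof. by rewrite dotvC dotvDl !(dotvC w). Qed.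

Lemma dotvZr c u w : dotv w (c *: u) = c * dotv w u.
Proof. by rewrite dotvC dotvZl dotvC. Qed.

Lemma dotvNr u w : dotv w (- u) = - dotv w u.
Proof. by rewrite dotvC dotvNl dotvC. Qed.

Lemma dotvBr u v w : dotv w (u - v) = dotv w u - dotv w v.
Proof. by rewrite dotvDr dotvNr. Qed.

Lemma dotv0l v : dotv 0 v = 0.
Proof. by rewrite -(scale0r 0) dotvZl mul0r. Qed.

Lemma dotvv_ge0 u : 0 <= dotv u u.
Proof. by rewrite dotvE; apply: sumr_ge0 => j _; rewrite -expr2 sqr_ge0. Qed.

Lemma dotvv_eq0 u : dotv u u = 0 -> u = 0.
Proof.
rewrite dotvE => /eqP; rewrite psumr_eq0 => [/allP u0|j _]; last first.
  by rewrite -expr2 sqr_ge0.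
apply/matrixP => j k; rewrite ord1 mxE.
by have := u0 j (mem_index_enum j); rewrite -expr2 sqrf_eq0 => /eqP.
Qed.

Lemma normv_ge0 u : 0 <= normv u.
Proof. exact: sqrtr_ge0. Qed.

Lemma normv_sqr u : normv u ^+ 2 = dotv u u.
Proof. by rewrite /normv sqr_sqrtr // dotvv_ge0. Qed.

Lemma normvN u : normv (- u) = normv u.
Proof. by rewrite /normv dotvNl dotvNr opprK. Qed.

Lemma normv_le u c : 0 <= c -> dotv u u <= c ^+ 2 -> normv u <= c.
Proof. by move=> c_ge0; rewrite -normv_sqr ler_pXn2r ?nnegrE ?normv_ge0. Qed.

Lemma normv_gt0 u : u != 0 -> 0 < normv u.
Proof.
move=> u_neq0; rewrite lt_def normv_ge0 andbT sqrtr_eq0 -ltNge lt_def dotvv_ge0 andbT.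
by apply: contra_neq u_neq0; apply: dotvv_eq0.
Qed.

Lemma cauchy_schwarz u v : dotv u v <= normv u * normv v.
Proof.
have [-> | /normv_gt0 nu_gt0] := eqVneq u 0.
  by rewrite dotv0l /normv dotv0l sqrtr0 mul0r.
have [-> | /normv_gt0 nv_gt0] := eqVneq v 0.
  by rewrite dotvC dotv0l /normv dotv0l sqrtr0 mulr0.
have := dotvv_ge0 (normv v *: u - normv u *: v).
rewrite !dotvBl !dotvBr !dotvZl !dotvZr -!normv_sqr (dotvC v u).
have AB_gt0 := mulr_gt0 nu_gt0 nv_gt0.
move: (dotv u v) (normv u) (normv v) AB_gt0 => c A B AB_gt0 h.
rewrite leNgt; apply/negP => hc; nra.
Qed.

Lemma abs_dotv_le u v : `|dotv u v| <= normv u * normv v.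
Proof.
rewrite ler_norml cauchy_schwarz andbT lerNl -dotvNr -(normvN v).
exact: cauchy_schwarz.
Qed.

Lemma dotv_delta (i : 'I_n) u : dotv u (delta_mx i 0) = u i 0.
Proof.
rewrite dotvE (bigD1 i) //= big1 => [|j j_neq_i]; first by rewrite !mxE !eqxx mulr1 addr0.
by rewrite !mxE (negbTE j_neq_i) mulr0.
Qed.

Lemma dotv_ball_le u v z r :
  normv (u - v) <= r -> `|dotv u z - dotv v z| <= r * normv z.
Proof.
move=> uv_le; rewrite -dotvBl; apply: le_trans (abs_dotv_le _ _) _.
by rewrite ler_wpM2r ?normv_ge0.
Qed.

Section VariationalInequality.
Variable F : 'cV[R]_n -> R.

Lemma vi_unique C u w :
  0 <= dotv w (u - w) + C * (F u - F w) ->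
  0 <= dotv u (w - u) + C * (F w - F u) -> u = w.
Proof.
move=> vi_w vi_u; apply/eqP; rewrite -subr_eq0; apply/eqP/dotvv_eq0.
apply/eqP; rewrite eq_le dotvv_ge0 andbT.
move: vi_w vi_u; rewrite !dotvBl !dotvBr (dotvC w u); lra.
Qed.

Lemma vi_screening_ball C C' w w' : 0 < C -> C <= C' ->
  0 <= dotv w (w' - w) + C * (F w' - F w) ->
  0 <= dotv w' (w - w') + C' * (F w - F w') ->
  normv (w' - ((C + C') / (2 * C)) *: w) <= (C' - C) / (2 * C) * normv w.
Proof.
move=> C_gt0 C_le vi vi'.
have r_ge0 : 0 <= (C' - C) / (2 * C) by apply: divr_ge0; lra.
apply: normv_le; first exact: mulr_ge0 (normv_ge0 w).
rewrite exprMn normv_sqr -subr_ge0.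
move: vi vi'; rewrite !dotvBl !dotvBr !dotvZl !dotvZr (dotvC w' w).
move: (dotv w w) (dotv w w') (dotv w' w') (F w) (F w') => P Q S F0 F1 vi vi'.
(* [C'/C] times the first inequality plus the second one is exactly the claim *)
have vi_sum : 0 <= C' / C * (Q - P + C * (F1 - F0)) + (Q - S + C' * (F0 - F1)).
  by apply: addr_ge0 => //; apply: mulr_ge0 => //; rewrite divr_ge0 ?ltW //; lra.
apply: le_trans vi_sum _; rewrite le_eqVlt; apply/orP; left; apply/eqP.
by field; rewrite gt_eqF.
Qed.

End VariationalInequality.

End InnerProduct.

Lemma small_quadratic_ge0 (R : realFieldType) (A B d : R) : 0 < d -> 0 <= B ->
  (forall e, 0 < e -> e <= d -> 0 <= e * A + e ^+ 2 * B) -> 0 <= A.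
Proof.
move=> d_gt0 B_ge0 hq; rewrite leNgt; apply/negP => A_lt0.
have B1_gt0 : 0 < B + 1 by lra.
pose e := Num.min d (- A / (B + 1)).
have e_gt0 : 0 < e by rewrite lt_min d_gt0 divr_gt0 // oppr_gt0.
have e_le_d : e <= d by rewrite ge_min lexx.
have eB : e * B < - A.
  have e_le : e <= - A / (B + 1) by rewrite ge_min lexx orbT.
  apply: (le_lt_trans (ler_wpM2r B_ge0 e_le)).
  by rewrite mulrAC ltr_pdivrMr //; nra.
have := hq e e_gt0 e_le_d; nra.
Qed.

Section SublinearIotaConjugate.
Variables (R : realType) (phi : R -> R) (alpha beta : R).
Hypothesis phi_homog : forall t x, 0 < t -> phi (t * x) = t * phi x.
Hypothesis phi_conj : forall s, fconj phi s = iota_itv alpha beta s.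
Hypothesis alpha_le_beta : alpha <= beta.

Lemma conj_iota_minorant s t : alpha <= s <= beta -> s * t <= phi t.
Proof.
move=> s_itv; rewrite -subr_le0 -lee_fin.
apply: (@le_trans _ _ (fconj phi s)); first by apply: ereal_sup_ubound; exists t.
by rewrite phi_conj /iota_itv s_itv.
Qed.

Lemma conj_iota_minorant_itv s : (forall t, s * t <= phi t) -> alpha <= s <= beta.
Proof.
move=> minor.
have : (fconj phi s <= 0)%E.
  by apply: ge_ereal_sup => _ [t _ <-]; rewrite lee_fin subr_le0.
by rewrite phi_conj /iota_itv; case: ifP => // _; rewrite leye_eq.
Qed.

Lemma sublinear_phi0 : phi 0 = 0.
Proof. by have := @phi_homog 2 0 (ltr0n R 2); rewrite mulr0; lra. Qed.

Lemma sublinear_phi_nonneg t : 0 <= t -> phi t = t * phi 1.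
Proof.
rewrite le_eqVlt => /predU1P[<- | t_gt0]; first by rewrite mul0r sublinear_phi0.
by rewrite -phi_homog // mulr1.
Qed.

Lemma sublinear_phi_nonpos t : t <= 0 -> phi t = - t * phi (-1).
Proof.
rewrite le_eqVlt => /predU1P[-> | t_lt0]; first by rewrite oppr0 mul0r sublinear_phi0.
by rewrite -phi_homog ?oppr_gt0 // mulrN1 opprK.
Qed.

Lemma conj_iota_phi1 : phi 1 = beta /\ phi (-1) = - alpha.
Proof.
have beta_le : beta <= phi 1.
  by have := @conj_iota_minorant beta 1; rewrite mulr1 lexx alpha_le_beta; apply.
have alpha_le : - alpha <= phi (-1).
  by have := @conj_iota_minorant alpha (-1); rewrite mulrN1 lexx alpha_le_beta; apply.
have slopes_ge0 : 0 <= phi 1 + phi (-1).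
  by apply: le_trans (lerD beta_le alpha_le); rewrite subr_ge0.
(* [phi 1 * t] and [- phi (-1) * t] minorize [phi], so both slopes lie in [alpha, beta] *)
have /andP[_ le_beta] : alpha <= phi 1 <= beta.
  apply: conj_iota_minorant_itv => t; have [t_ge0 | t_lt0] := leP 0 t.
    by rewrite (sublinear_phi_nonneg t_ge0) mulrC.
  rewrite (sublinear_phi_nonpos (ltW t_lt0)) -subr_ge0.
  have -> : - t * phi (-1) - phi 1 * t = - t * (phi 1 + phi (-1)) by ring.
  by rewrite mulr_ge0 // oppr_ge0 ltW.
have /andP[le_alpha _] : alpha <= - phi (-1) <= beta.
  apply: conj_iota_minorant_itv => t; have [t_ge0 | t_lt0] := leP 0 t.
    rewrite (sublinear_phi_nonneg t_ge0) -subr_ge0.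
    have -> : t * phi 1 - - phi (-1) * t = t * (phi 1 + phi (-1)) by ring.
    exact: mulr_ge0.
  by rewrite (sublinear_phi_nonpos (ltW t_lt0)) !mulNr mulrC.
split; apply/eqP; rewrite eq_le ?beta_le ?le_beta //.
by rewrite alpha_le andbT lerNr.
Qed.

Lemma conj_iota_phi_nonneg t : 0 <= t -> phi t = beta * t.
Proof. by move=> t_ge0; rewrite sublinear_phi_nonneg // conj_iota_phi1.1 mulrC. Qed.

Lemma conj_iota_phi_nonpos t : t <= 0 -> phi t = alpha * t.
Proof.
by move=> t_le0; rewrite sublinear_phi_nonpos // conj_iota_phi1.2 mulrNN mulrC.
Qed.

End SublinearIotaConjugate.

Section Primal.
Variables (R : realType) (l n : nat) (phi : R -> R) (a b y : 'I_l -> R).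
Variable x : 'I_l -> 'cV[R]_n.

Definition loss (w : 'cV[R]_n) : R := \sum_(i < l) phi (dotv w (a i *: x i) + b i * y i).

Hypothesis phi_convex : forall s t lam, 0 <= lam -> lam <= 1 ->
  phi (lam * s + (1 - lam) * t) <= lam * phi s + (1 - lam) * phi t.

Lemma loss_convex w d e : 0 <= e -> e <= 1 ->
  loss (w + e *: d) <= e * loss (w + d) + (1 - e) * loss w.
Proof.
move=> e_ge0 e_le1; rewrite /loss !mulr_sumr -big_split /=; apply: ler_sum => i _.
have -> : dotv (w + e *: d) (a i *: x i) + b i * y i =
    e * (dotv (w + d) (a i *: x i) + b i * y i) + (1 - e) * (dotv w (a i *: x i) + b i * y i).
  by rewrite !dotvDl dotvZl; ring.
exact: phi_convex.
Qed.

Lemma primal_opt_vi C w : 0 <= C -> primal_opt phi a b y x C w ->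
  forall v, 0 <= dotv w (v - w) + C * (loss v - loss w).
Proof.
move=> C_ge0 w_opt v; rewrite -[in loss v](subrKC w v).
move: (v - w) => d; apply: (@small_quadratic_ge0 _ _ (dotv d d / 2) 1) => //.
  by rewrite divr_ge0 ?dotvv_ge0.
move=> e e_gt0 e_le1.
have := ler_wpM2l C_ge0 (loss_convex w d (ltW e_gt0) e_le1).
have := w_opt (w + e *: d); rewrite /primal_obj !normv_sqr.
rewrite dotvDl !dotvDr !dotvZl !dotvZr (dotvC d w) -/(loss w) -/(loss (w + e *: d)).
move: (loss (w + e *: d)) (loss (w + d)) (loss w) => Fe Fd Fw.
move: (dotv w w) (dotv w d) (dotv d d) => P Q S opt_gap convex_gap.
rewrite -subr_ge0 in convex_gap; rewrite -subr_ge0 in opt_gap.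
apply: le_trans (addr_ge0 opt_gap convex_gap) _.
by rewrite le_eqVlt; apply/orP; left; apply/eqP; field.
Qed.

End Primal.

Section Dual.
Variables (R : realType) (l n : nat) (alpha beta : R) (a b y : 'I_l -> R).
Variable x : 'I_l -> 'cV[R]_n.
Implicit Types (C s : R) (th : 'cV[R]_l) (i : 'I_l).

Definition dual_point C th : 'cV[R]_n := - C *: ((Zmat a x)^T *m th).

Lemma Zmat_tr_delta i : (Zmat a x)^T *m delta_mx i 0 = a i *: x i.
Proof.
apply/matrixP => j k; rewrite ord1 !mxE (bigD1 i) //= big1 => [|m m_neq_i].
  by rewrite !mxE !eqxx mulr1 addr0.
by rewrite !mxE (negbTE m_neq_i) mulr0.
Qed.

Lemma dotv_Zmat_tr th d :
  dotv d ((Zmat a x)^T *m th) = \sum_j th j 0 * dotv d (a j *: x j).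
Proof.
rewrite dotvE; under [RHS]eq_bigr => j _ do rewrite dotvE mulr_sumr.
rewrite exchange_big /=; apply: eq_bigr => k _.
rewrite !mxE mulr_sumr; apply: eq_bigr => j _; rewrite !mxE; ring.
Qed.

Lemma dual_obj_shift C th i s :
  dual_obj a b y x C (th + s *: delta_mx i 0) - dual_obj a b y x C th =
  - s * (dotv (dual_point C th) (a i *: x i) + b i * y i)
  + s ^+ 2 * (C / 2 * dotv (a i *: x i) (a i *: x i)).
Proof.
rewrite /dual_obj /dual_point !normv_sqr mulmxDr -scalemxAr Zmat_tr_delta.
rewrite dotvDr dotvZr dotv_delta mxE !dotvDl !dotvDr !dotvZl !dotvZr (dotvC (x i)).
by field.
Qed.

Lemma dual_feas_shift th i s : dual_feas alpha beta th ->
  alpha <= th i 0 + s <= beta -> dual_feas alpha beta (th + s *: delta_mx i 0).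
Proof.
move=> feas shift_itv j; rewrite !mxE; have [<- | _] := eqVneq i j.
  by rewrite eqxx mulr1.
by rewrite mulr0 addr0.
Qed.

Lemma dual_opt_calR C th i : 0 <= C -> dual_opt alpha beta a b y x C th ->
  in_calR a b y x (dual_point C th) i -> th i 0 = alpha.
Proof.
move=> C_ge0 [feas th_opt] inR; have /andP[ge_alpha le_beta] := feas i.
apply/eqP; rewrite eq_le ge_alpha andbT leNgt; apply/negP => alpha_lt.
suff : 0 <= dotv (dual_point C th) (a i *: x i) + b i * y i by rewrite /in_calR in inR; lra.
apply: (@small_quadratic_ge0 _ _ (C / 2 * dotv (a i *: x i) (a i *: x i)) (th i 0 - alpha)).
- by rewrite subr_gt0.
- by rewrite mulr_ge0 ?divr_ge0 ?dotvv_ge0.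
move=> e e_gt0 e_le.
have shift_feas : alpha <= th i 0 + - e <= beta by apply/andP; split; lra.
have := th_opt _ (dual_feas_shift feas shift_feas).
by rewrite -subr_ge0 dual_obj_shift opprK sqrrN.
Qed.

Lemma dual_opt_calL C th i : 0 <= C -> dual_opt alpha beta a b y x C th ->
  in_calL a b y x (dual_point C th) i -> th i 0 = beta.
Proof.
move=> C_ge0 [feas th_opt] inL; have /andP[ge_alpha le_beta] := feas i.
apply/eqP; rewrite eq_le le_beta /= leNgt; apply/negP => lt_beta.
suff : 0 <= - (dotv (dual_point C th) (a i *: x i) + b i * y i).
  by rewrite /in_calL in inL; lra.
apply: (@small_quadratic_ge0 _ _ (C / 2 * dotv (a i *: x i) (a i *: x i)) (beta - th i 0)).
- by rewrite subr_gt0.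
- by rewrite mulr_ge0 ?divr_ge0 ?dotvv_ge0.
move=> e e_gt0 e_le.
have shift_feas : alpha <= th i 0 + e <= beta by apply/andP; split; lra.
have := th_opt _ (dual_feas_shift feas shift_feas).
by rewrite -subr_ge0 dual_obj_shift mulNr -mulrN.
Qed.

End Dual.

Section DualPrimal.
Variables (R : realType) (l n : nat) (phi : R -> R) (alpha beta : R).
Variables (a b y : 'I_l -> R) (x : 'I_l -> 'cV[R]_n).
Hypothesis phi_subl : sublinear phi.
Hypothesis phi_conj : forall s, fconj phi s = iota_itv alpha beta s.
Hypothesis alpha_le_beta : alpha <= beta.

Lemma dual_opt_phi_margin C th j : 0 <= C -> dual_opt alpha beta a b y x C th ->
  let T := dotv (dual_point a x C th) (a j *: x j) + b j * y j in phi T = th j 0 * T.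
Proof.
move=> C_ge0 th_opt T; have [T_lt0 | T_gt0 | ->] := ltgtP T 0.
- have inR : in_calR a b y x (dual_point a x C th) j by move: T_lt0; rewrite /in_calR /T; lra.
  rewrite (dual_opt_calR C_ge0 th_opt inR).
  exact: conj_iota_phi_nonpos phi_subl.2 phi_conj alpha_le_beta _ (ltW T_lt0).
- have inL : in_calL a b y x (dual_point a x C th) j by move: T_gt0; rewrite /in_calL /T; lra.
  rewrite (dual_opt_calL C_ge0 th_opt inL).
  exact: conj_iota_phi_nonneg phi_subl.2 phi_conj alpha_le_beta _ (ltW T_gt0).
- by rewrite (sublinear_phi0 phi_subl.2) mulr0.
Qed.

Lemma dual_opt_vi C th : 0 <= C -> dual_opt alpha beta a b y x C th ->
  let u := dual_point a x C th in
  forall v, 0 <= dotv u (v - u) + C * (loss phi a b y x v - loss phi a b y x u).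
Proof.
move=> C_ge0 th_opt u v.
have loss_gap :
    dotv (v - u) ((Zmat a x)^T *m th) <= loss phi a b y x v - loss phi a b y x u.
  rewrite dotv_Zmat_tr /loss -sumrB; apply: ler_sum => j _.
  rewrite (dual_opt_phi_margin j C_ge0 th_opt) -/u dotvBl -subr_ge0.
  have -> : phi (dotv v (a j *: x j) + b j * y j)
      - th j 0 * (dotv u (a j *: x j) + b j * y j)
      - th j 0 * (dotv v (a j *: x j) - dotv u (a j *: x j))
    = phi (dotv v (a j *: x j) + b j * y j) - th j 0 * (dotv v (a j *: x j) + b j * y j).
    by ring.
  by rewrite subr_ge0 (conj_iota_minorant phi_conj) ?(th_opt.1 j).
have -> : dotv u (v - u) = - C * dotv (v - u) ((Zmat a x)^T *m th).
  by rewrite dotvC [in X in dotv _ X]/u /dual_point dotvZr.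
by rewrite mulNr addrC -mulrBr mulr_ge0 // subr_ge0.
Qed.

Lemma primal_opt_dual_point C th w : 0 <= C -> primal_opt phi a b y x C w ->
  dual_opt alpha beta a b y x C th -> dual_point a x C th = w.
Proof.
move=> C_ge0 w_opt th_opt.
exact: vi_unique (primal_opt_vi phi_subl.1 C_ge0 w_opt _) (dual_opt_vi C_ge0 th_opt w).
Qed.

End DualPrimal.

Lemma increasing_seq_gt0 (R : realFieldType) (Cs : nat -> R) (K : nat) :
  0 < Cs 1%N -> (forall j, (1 <= j)%N -> (j < K)%N -> Cs j < Cs j.+1) ->
  forall j, (1 <= j <= K)%N -> 0 < Cs j.
Proof.
move=> C1_gt0 Cs_incr; elim=> [// | j IH] /andP[_ j_lt_K].
have [-> // | j_gt0] := posnP j.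
by apply: lt_trans (IH _) (Cs_incr j j_gt0 j_lt_K); rewrite j_gt0 (ltnW j_lt_K).
Qed.

Theorem corollary2 (R : realType) (l n : nat) (hl : (0 < l)%N) (hn : (0 < n)%N)
  (x : 'I_l -> 'cV[R]_n) (y a b : 'I_l -> R)
  (phi : R -> R) (alpha beta : R)
  (phi_ge0 : forall t, 0 <= phi t)
  (phi_ncst : exists t1 t2, phi t1 <> phi t2)
  (phi_cont : continuous phi)
  (phi_subl : sublinear phi)
  (phi_conj : forall s, fconj phi s = iota_itv alpha beta s)
  (hab : alpha < beta)
  (Cs : nat -> R) (K : nat)
  (hC1 : 0 < Cs 1%N)
  (hCinc : forall j : nat, (1 <= j)%N -> (j < K)%N -> Cs j < Cs j.+1)
  (k : nat) (hk1 : (1 <= k)%N) (hkK : (k < K)%N)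
  (wk : 'cV[R]_n) (hwk : primal_opt phi a b y x (Cs k) wk)
  (wk1 : 'cV[R]_n) (hwk1 : primal_opt phi a b y x (Cs k.+1) wk1)
  (thk1 : 'cV[R]_l) (hthk1 : dual_opt alpha beta a b y x (Cs k.+1) thk1)
  (i : 'I_l) :
  (- ((Cs k + Cs k.+1) / (2 * Cs k)) * dotv wk (a i *: x i)
     - (Cs k.+1 - Cs k) / (2 * Cs k) * normv wk * normv (a i *: x i) > b i * y i ->
   thk1 i 0 = alpha /\ in_calR a b y x wk1 i) /\
  (- ((Cs k + Cs k.+1) / (2 * Cs k)) * dotv wk (a i *: x i)
     + (Cs k.+1 - Cs k) / (2 * Cs k) * normv wk * normv (a i *: x i) < b i * y i ->
   thk1 i 0 = beta /\ in_calL a b y x wk1 i).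
Proof.
have C_gt0 : 0 < Cs k by apply: increasing_seq_gt0 hC1 hCinc _ _; rewrite hk1 ltnW.
have C_lt := hCinc k hk1 hkK.
have C'_ge0 := ltW (lt_trans C_gt0 C_lt).
have wk1E : dual_point a x (Cs k.+1) thk1 = wk1.
  exact: (primal_opt_dual_point (x := x) phi_subl phi_conj (ltW hab) C'_ge0 hwk1 hthk1).
have ball := vi_screening_ball C_gt0 (ltW C_lt)
  (primal_opt_vi phi_subl.1 (ltW C_gt0) hwk wk1) (primal_opt_vi phi_subl.1 C'_ge0 hwk1 wk).
have := dotv_ball_le (a i *: x i) ball; rewrite dotvZl ler_norml => /andP[lb ub].
move: ((Cs k + Cs k.+1) / (2 * Cs k)) ((Cs k.+1 - Cs k) / (2 * Cs k)) lb ub => c r lb ub.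
split=> screen.
- have inR : in_calR a b y x wk1 i by rewrite /in_calR; lra.
  by split=> //; apply: dual_opt_calR C'_ge0 hthk1 _; rewrite wk1E.
- have inL : in_calL a b y x wk1 i by rewrite /in_calL; lra.
  by split=> //; apply: dual_opt_calL C'_ge0 hthk1 _; rewrite wk1E.
Qed.
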